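(* Let $(S,\Delta,\mathbb{P})$ be a probability space, $(U,d)$ a separable metric space, $\mathfrak{X}$ the set of $U$-valued random variables on $S$, $r\geq0$, $\mathcal{I}$ an ideal on $\mathbb{N}$, and $\underline{X}=\{X_n\}$ a sequence in $\mathfrak{X}$. Suppose that to each $Y\in\Gamma^{r^w}_{\underline{X}}(\mathcal{I}^{\mathbb{P}})$ a weak cluster constant $\delta_*(Y)$ is associated and that $\inf\{\delta_*(Y):Y\in\Gamma^{r^w}_{\underline{X}}(\mathcal{I}^{\mathbb{P}})\}>0$. Then $\Gamma^{r^w}_{\underline{X}}(\mathcal{I}^{\mathbb{P}})$ is closed in $(\mathfrak{X}^0,\rho)$.
   Context: The Ky Fan metric is $\rho(X,Y)=\inf\{\varepsilon>0:\mathbb{P}(d(X,Y)>\varepsilon)\leq\varepsilon\}$; $\mathfrak{X}^0$ is the set of equivalence classes of $\mathfrak{X}$ under almost sure equality, on which $\rho$ is a metric. An ideal on $\mathbb{N}$ is a family $\mathcal{I}\subseteq\mathcal{P}(\mathbb{N})$ with $\varnothing\in\mathcal{I}$, closed under finite unions and under subsets. $\Gamma^{r^w}_{\underline{X}}(\mathcal{I}^{\mathbb{P}})$ is the set of $Y\in\mathfrak{X}$ for which there is $\delta_*=\delta_*(Y)>0$ with $\{n:\mathbb{P}(d(X_n,Y)<r+\varepsilon)>\delta_*\}\notin\mathcal{I}$ for every $\varepsilon>0$; such a $\delta_*(Y)$ is called a weak cluster constant of $Y$ (with respect to $\underline{X}$). *)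

From HB Require Import structures.
From mathcomp Require Import all_boot all_order all_algebra.
From mathcomp Require Import all_classical all_reals all_analysis.
Set Implicit Arguments. Unset Strict Implicit. Unset Printing Implicit Defensive.
Import Order.TTheory GRing.Theory Num.Theory.
Local Open Scope classical_set_scope.
Local Open Scope ring_scope.

Section Defs.
Context (R : realType) (U : Type) (dist : U -> U -> R).

Definition is_metric : Prop :=
  (forall x y, 0 <= dist x y) /\
  (forall x y, dist x y = 0 <-> x = y) /\
  (forall x y, dist x y = dist y x) /\
  (forall x y z, dist x z <= dist x y + dist y z).

Definition separable_metric : Prop :=
  exists D : set U, countable D /\
    forall x e, 0 < e -> exists2 y, D y & dist x y < e.

Definition metric_open (A : set U) : Prop :=
  forall x, A x -> exists2 e, 0 < e & forall y, dist x y < e -> A y.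

Definition metric_borel : set (set U) := <<s metric_open >>.

Definition is_rv (d : measure_display) (S : measurableType d) (X : S -> U) : Prop :=
  forall A, metric_borel A -> measurable (X @^-1` A).

Definition is_ideal (I : set (set nat)) : Prop :=
  I set0 /\ (forall A B, I A -> I B -> I (A `|` B)) /\
  (forall A B, B `<=` A -> I A -> I B).

Context (d : measure_display) (S : measurableType d) (P : probability S R).

Definition weak_cluster_const (X : nat -> S -> U) (r : R) (I : set (set nat))
    (Y : S -> U) (delta : R) : Prop :=
  0 < delta /\
  forall e, 0 < e ->
    ~ I [set n | (delta%:E < P [set s | (dist (X n s) (Y s) < r + e)%R])%E].

Definition Gamma_rw (X : nat -> S -> U) (r : R) (I : set (set nat)) : set (S -> U) :=
  [set Y | is_rv Y /\ exists delta, weak_cluster_const X r I Y delta].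

Definition kyfan (Y Z : S -> U) : R :=
  inf [set e : R | 0 < e /\ (P [set s | (e < dist (Y s) (Z s))%R] <= e%:E)%E].

End Defs.

(* Let c > 0 bound all the weak cluster constants from below and let Y be a Ky
   Fan limit point of Gamma.  Given e > 0, pick Z in Gamma with rho(Z, Y) small,
   so that P(d(Z, Y) > e') <= e' for some e' < min(e, c/2).  By the triangle
   inequality {d(X_n, Z) < r + e - e'} lies in {d(X_n, Y) < r + e} up to the
   event {d(Z, Y) > e'}, so every n with P(d(X_n, Z) < r + e - e') > delta_*(Z)
   satisfies P(d(X_n, Y) < r + e) > c - e' > c/2.  The former indices do not
   form a set of I, hence neither do the latter: c/2 is a weak cluster constant
   of Y. *)
From HB Require Import structures.
From mathcomp Require Import all_boot all_order all_algebra.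
From mathcomp Require Import all_classical all_reals all_analysis.
From mathcomp Require Import lra.
Import Order.TTheory GRing.Theory Num.Theory.
Local Open Scope classical_set_scope.
Local Open Scope ring_scope.

Lemma ideal_notin_superset {I : set (set nat)} {A B : set nat} :
  is_ideal I -> ~ I A -> A `<=` B -> ~ I B.
Proof. by move=> [_ [_ subI]] IA AB IB; apply/IA/(subI _ _ AB). Qed.

Section MetricRandomVariables.
Context {d : measure_display} {S : measurableType d} {R : realType}.
Context {U : Type} {dist : U -> U -> R}.
Hypothesis dist_metric : is_metric dist.

Lemma metric_borel_ball (x : U) (a : R) : metric_borel dist [set y | dist y x < a].
Proof.
apply: sub_sigma_algebra => y /= yx; exists (a - dist y x); first by rewrite subr_gt0.
move=> z yz; case: dist_metric => _ [_ [distC dist_triangle]].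
have := dist_triangle z y x; rewrite (distC z y); lra.
Qed.

Hypothesis dist_separable : separable_metric dist.

(* Separability makes {d(V, W) < t} a countable union of the events
   {d(V, x) < q} `&` {d(W, x) < t - q}, x in a countable dense set, q rational. *)
Lemma measurable_dist_lt {V W : S -> U} (t : R) : is_rv dist V -> is_rv dist W ->
  measurable [set s | dist (V s) (W s) < t].
Proof.
move=> rvV rvW; case: dist_separable => D [/countable_injP [f f_inj] D_dense].
case: dist_metric => _ [_ [distC dist_triangle]].
pose G (q : rat) (n : nat) := [set s | exists2 x, D x /\ f x = n &
   dist (V s) x < ratr q /\ dist (W s) x < t - ratr q].
have -> : [set s | dist (V s) (W s) < t] = \bigcup_q \bigcup_n G q n.
  apply/seteqP; split => s /=.
  - move=> VWt.
    have gap : 0 < (t - dist (V s) (W s)) / 4 by rewrite divr_gt0 ?subr_gt0.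
    have [y Dy Vy] := D_dense (V s) _ gap.
    have := dist_triangle (W s) (V s) y; rewrite (distC (W s) (V s)) => Wy.
    have : dist (V s) y < t - dist (W s) y by lra.
    move=> /rat_in_itvoo [q]; rewrite in_itv /= => /andP [q1 q2].
    by exists q => //; exists (f y) => //; exists y => //; split => //; lra.
  - move=> [q _ [n _ [x _ [Vx Wx]]]].
    have := dist_triangle (V s) x (W s); rewrite (distC x (W s)); lra.
apply: bigcupT_measurable_rat => q; apply: bigcupT_measurable => n.
have [[x [Dx fx]]|nDn] := pselect (exists x, D x /\ f x = n).
- have -> : G q n = V @^-1` [set y | dist y x < ratr q] `&`
                    W @^-1` [set y | dist y x < t - ratr q].
    apply/seteqP; split => s /=; last by move=> [Vx Wx]; exists x.
    move=> [y [Dy fy] VWy].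
    by have <- : y = x by apply: f_inj; rewrite ?inE // fy fx.
  by apply: measurableI; [apply: rvV | apply: rvW]; apply: metric_borel_ball.
- have -> : G q n = set0.
    by apply/seteqP; split => s //= [y Dyn _]; apply: nDn; exists y.
  exact: measurable0.
Qed.

Lemma measurable_dist_gt {V W : S -> U} (t : R) : is_rv dist V -> is_rv dist W ->
  measurable [set s | t < dist (V s) (W s)].
Proof.
move=> rvV rvW.
have -> : [set s | t < dist (V s) (W s)] =
    \bigcup_n ~` [set s | dist (V s) (W s) < t + n.+1%:R^-1].
  apply/seteqP; split => s /=.
  - by move=> /ltr_add_invr [k tk]; exists k => //=; apply/negP; rewrite -leNgt ltW.
  - move=> [k _] /= /negP; rewrite -leNgt; apply: lt_le_trans.
    by rewrite ltrDl invr_gt0.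
by apply: bigcupT_measurable => n; apply/measurableC/measurable_dist_lt.
Qed.

Variable P : probability S R.

Lemma kyfan_lt {Z Y : S -> U} {eta : R} : is_rv dist Z -> is_rv dist Y ->
  kyfan dist P Z Y < eta ->
  exists2 e, 0 < e /\ e < eta & (P [set s | (e < dist (Z s) (Y s))%R] <= e%:E)%E.
Proof.
move=> rvZ rvY /inf_lt[].
  exists 1; split; first exact: ltr01.
  exact/probability_le1/measurable_dist_gt.
by move=> e [e_gt0 Pe] e_lt; exists e.
Qed.

Lemma prob_dist_lt_approx {V Z Y : S -> U} (t : R) {e : R} :
  is_rv dist V -> is_rv dist Z -> is_rv dist Y ->
  (P [set s | (e < dist (Z s) (Y s))%R] <= e%:E)%E ->
  (P [set s | (dist (V s) (Z s) < t)%R] <=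
   P [set s | (dist (V s) (Y s) < t + e)%R] + e%:E)%E.
Proof.
move=> rvV rvZ rvY PZY.
have mVY := measurable_dist_lt (t + e) rvV rvY.
have mZY := measurable_dist_gt e rvZ rvY.
have VZ_sub : [set s | dist (V s) (Z s) < t] `<=`
    [set s | dist (V s) (Y s) < t + e] `|` [set s | e < dist (Z s) (Y s)].
  move=> s /= VZt; have [|ZYe] := ltP e (dist (Z s) (Y s)); [by right | left].
  case: dist_metric => _ [_ [_ dist_triangle]].
  have := dist_triangle (V s) (Z s) (Y s); lra.
apply: (le_trans (le_measure _ _ _ VZ_sub)); rewrite ?inE.
- exact: measurable_dist_lt.
- exact: measurableU.
- by apply: (le_trans (measureU2 _ mVY mZY)); rewrite leeD2l.
Qed.

Lemma weak_cluster_set_approx {X : nat -> S -> U} {Z Y : S -> U} {t e a b : R} :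
  (forall n, is_rv dist (X n)) -> is_rv dist Z -> is_rv dist Y ->
  (P [set s | (e < dist (Z s) (Y s))%R] <= e%:E)%E -> a + e <= b ->
  [set n | (b%:E < P [set s | (dist (X n s) (Z s) < t - e)%R])%E] `<=`
  [set n | (a%:E < P [set s | (dist (X n s) (Y s) < t)%R])%E].
Proof.
move=> rvX rvZ rvY PZY aeb n /= b_lt.
have := lt_le_trans b_lt (prob_dist_lt_approx (t - e) (rvX n) rvZ rvY PZY).
have ae_le_b : ((a + e)%:E <= b%:E)%E by rewrite lee_fin.
by move=> /(le_lt_trans ae_le_b); rewrite subrK EFinD lteD2rE.
Qed.

End MetricRandomVariables.

Theorem proposition3p13 (d : measure_display) (S : measurableType d)
  (R : realType) (P : probability S R) (U : Type) (dist : U -> U -> R)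
  (r : R) (I : set (set nat)) (X : nat -> S -> U)
  (deltastar : (S -> U) -> R) :
  is_metric dist -> separable_metric dist -> 0 <= r -> is_ideal I ->
  (forall n, is_rv dist (X n)) ->
  (forall Y, Gamma_rw dist P X r I Y ->
     weak_cluster_const dist P X r I Y (deltastar Y)) ->
  (exists2 c : R, 0 < c &
     forall Y, Gamma_rw dist P X r I Y -> c <= deltastar Y) ->
  (* Gamma is closed in (X^0, rho): it contains every random variable in its
     Ky Fan closure *)
  forall Y : S -> U, is_rv dist Y ->
    (forall eta : R, 0 < eta ->
       exists2 Z, Gamma_rw dist P X r I Z & kyfan dist P Z Y < eta) ->
    Gamma_rw dist P X r I Y.
Proof.
move=> metric separable _ ideal rvX cluster [c c_gt0 c_le] Y rvY Y_limit.
split=> //; exists (c / 2); split=> [|e e_gt0]; first exact: divr_gt0.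
have [|Z GammaZ ZY_close] := Y_limit (Num.min e (c / 2)).
  by rewrite lt_min e_gt0 divr_gt0.
have rvZ : is_rv dist Z by case: GammaZ.
have [e' [e'_gt0]] := kyfan_lt metric separable P rvZ rvY ZY_close.
rewrite lt_min => /andP[e'_lt_e e'_lt_c] PZY.
have [_ Z_cluster] := cluster Z GammaZ.
apply: (ideal_notin_superset ideal (Z_cluster (e - e') _)); first by rewrite subr_gt0.
rewrite [r + (e - e')]addrA.
apply: (weak_cluster_set_approx metric separable P) rvX rvZ rvY PZY _.
by apply: le_trans (c_le Z GammaZ); rewrite [leRHS](splitr c) lerD2l ltW.
Qed.
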